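(* Let $G$ be a finite graph and let $\mathcal{B}$ be a set of closed neighborhoods in $G$. Suppose $G$ has four pairwise false twins $u_1,u_2,u_3,u_4$ (i.e. $N(u_i)=N(u_j)$ for all $i,j$) with $N[u_1],\ldots,N[u_4]\in\mathcal{B}$. Then for any non-clashing teaching map $T$ of size $1$ for $\mathcal{B}$, there exists $i\in\{1,2,3,4\}$ such that $T(N[u_i])=\{u_i\}$.
   Context: For a vertex $v$, $N(v)$ is its open neighborhood and $N[v]=N(v)\cup\{v\}$ its closed neighborhood. A teaching map for a set $\mathcal{B}$ of closed neighborhoods assigns to each $B\in\mathcal{B}$ a set $T(B)\subseteq V(G)$ (the examples, each labeled by membership in $B$). A vertex $w$ distinguishes $B,B'$ if $w\in (B\cup B')\setminus(B\cap B')$. $T$ is non-clashing if for all distinct $B,B'\in\mathcal{B}$ some $w\in T(B)\cup T(B')$ distinguishes $B$ and $B'$. The size of $T$ is $\max_{B\in\mathcal{B}}|T(B)|$. *)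

From mathcomp Require Import all_boot.
Set Implicit Arguments. Unset Strict Implicit. Unset Printing Implicit Defensive.

Definition simple_graph (V : finType) (e : rel V) : Prop :=
  symmetric e /\ irreflexive e.

Definition Nopen (V : finType) (e : rel V) (v : V) : {set V} := [set w | e v w].
Definition Nclosed (V : finType) (e : rel V) (v : V) : {set V} := v |: Nopen e v.

Definition distinguishes (V : finType) (w : V) (B B' : {set V}) : bool :=
  w \in (B :|: B') :\: (B :&: B').

Definition non_clashing (V : finType) (BB : {set {set V}})
    (T : {set V} -> {set V}) : Prop :=
  forall B B', B \in BB -> B' \in BB -> B != B' ->
    exists2 w, w \in T B :|: T B' & distinguishes w B B'.

Definition teaching_size (V : finType) (BB : {set {set V}})
    (T : {set V} -> {set V}) : nat :=
  \max_(B in BB) #|T B|.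

From mathcomp Require Import all_boot.

(* Write B_i for N[u_i]. As u_i lies in B_j exactly when i = j, the only
   vertices distinguishing B_i from B_j are u_i and u_j. If no T(B_i) is {u_i},
   then u_i is not in T(B_i) (because |T(B_i)| <= 1), so for i <> j either u_j is
   in T(B_i) or u_i is in T(B_j): the relation "u_j in T(B_i)" is a semicomplete
   digraph on the twins with out-degrees at most one. A vertex of such a digraph
   has at most one out-neighbour and at most one other in-neighbour (two
   in-neighbours would have to be joined by an arc, giving one of them two
   out-neighbours), so there are at most three vertices. *)

Lemma semicomplete_outdeg_le1_card_le3 (I : finType) (R : rel I) :
  (forall i j k, R i j -> R i k -> j = k) ->
  (forall i j, i != j -> R i j || R j i) ->
  #|I| <= 3.
Proof.
move=> R_fun R_semi; have [-> //|/card_gt0P[i _]] := posnP #|I|.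
have out_le1 : #|[set j | R i j]| <= 1.
  by apply/card_le1_eqP => j k; rewrite !inE => Rij /(R_fun _ _ _ Rij).
have in_le1 : #|[set j | R j i & j != i]| <= 1.
  apply/card_le1_eqP => j k; rewrite !inE => /andP[Rji ji] /andP[Rki ki].
  apply/eqP/negPn/negP => /R_semi /orP[Rkj | Rjk].
    by rewrite (R_fun _ _ _ Rkj Rki) eqxx in ji.
  by rewrite (R_fun _ _ _ Rjk Rji) eqxx in ki.
have cover : [set: I] \subset i |: ([set j | R j i & j != i] :|: [set j | R i j]).
  apply/subsetP => j _; rewrite !inE; have [-> //|ji /=] := eqVneq j i.
  by case/orP: (R_semi _ _ ji) => ->; rewrite ?orbT.
rewrite -cardsT; apply: (leq_trans (subset_leq_card cover)).
rewrite cardsU1 -[3]/(1 + (1 + 1)) leq_add ?leq_b1 //.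
by rewrite (leq_trans (leq_card_setU _ _)) ?leq_add.
Qed.

Lemma mem_Nclosed_false_twin (V : finType) (e : rel V) (x y : V) :
  irreflexive e -> Nopen e x = Nopen e y -> (x \in Nclosed e y) = (x == y).
Proof. by move=> e_irr xy; rewrite in_setU1 -xy inE e_irr orbF. Qed.

Lemma distinguishes_Nclosed_false_twins {V : finType} {e : rel V} {x y : V} w :
  Nopen e x = Nopen e y -> distinguishes w (Nclosed e x) (Nclosed e y) ->
  (w == x) || (w == y).
Proof.
rewrite /distinguishes /Nclosed => <-; rewrite !inE.
by case: (w == x) (w == y) (e x w) => [] [] [].
Qed.

Section FalseTwinTeaching.

Variables (V : finType) (e : rel V) (I : finType) (u : I -> V).
Hypotheses (e_irr : irreflexive e) (u_inj : injective u).
Hypothesis u_twins : forall i j, Nopen e (u i) = Nopen e (u j).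
Variables (BB : {set {set V}}) (T : {set V} -> {set V}).
Hypotheses (BB_u : forall i, Nclosed e (u i) \in BB) (T_nc : non_clashing BB T).
Hypothesis T_size : teaching_size BB T <= 1.

Local Notation B i := (Nclosed e (u i)).

Lemma mem_Nclosed_twins i j : (u i \in B j) = (i == j).
Proof. by rewrite mem_Nclosed_false_twin // (inj_eq u_inj). Qed.

Lemma card_T_twin_le1 i : #|T (B i)| <= 1.
Proof. exact: leq_trans (leq_bigmax_cond _ (BB_u i)) T_size. Qed.

Lemma T_twin_functional i j k : u j \in T (B i) -> u k \in T (B i) -> j = k.
Proof.
by move=> Tj Tk; apply: u_inj; apply: card_le1_eqP (card_T_twin_le1 i) _ _ Tk Tj.
Qed.

Lemma T_twin_semicomplete i j : u i \notin T (B i) -> u j \notin T (B j) ->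
  i != j -> (u j \in T (B i)) || (u i \in T (B j)).
Proof.
move=> Ti Tj ij; have B_ij : B i != B j.
  by apply: contraNneq ij => Bij; rewrite -mem_Nclosed_twins -Bij mem_Nclosed_twins.
have [w] := T_nc _ _ (BB_u i) (BB_u j) B_ij.
rewrite inE => /orP[] Tw /(distinguishes_Nclosed_false_twins _ (u_twins i j)).
  by case/orP=> /eqP w_eq; rewrite w_eq in Tw; rewrite Tw in Ti *.
by case/orP=> /eqP w_eq; rewrite w_eq in Tw; rewrite Tw ?orbT in Tj *.
Qed.

Lemma exists_self_taught_false_twin : 3 < #|I| -> exists i, T (B i) = [set u i].
Proof.
move=> I_gt3; have [i /eqP Ti | no_self] := pickP (fun i => T (B i) == [set u i]).
  by exists i.
have T_self i : u i \notin T (B i).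
  apply: contraFN (no_self i) => Ti; rewrite eq_sym eqEcard sub1set Ti cards1.
  exact: card_T_twin_le1.
suff : #|I| <= 3 by rewrite leqNgt I_gt3.
apply: (@semicomplete_outdeg_le1_card_le3 _ (fun i j => u j \in T (B i))).
  exact: T_twin_functional.
by move=> i j; apply: T_twin_semicomplete (T_self i) (T_self j).
Qed.

End FalseTwinTeaching.

Theorem lemma1 (V : finType) (e : rel V) (BB : {set {set V}})
    (u : 'I_4 -> V) :
  simple_graph e ->
  (forall B, B \in BB -> exists v, B = Nclosed e v) ->
  injective u ->
  (forall i j, Nopen e (u i) = Nopen e (u j)) ->
  (forall i, Nclosed e (u i) \in BB) ->
  forall T : {set V} -> {set V},
    non_clashing BB T -> teaching_size BB T = 1 ->
    exists i : 'I_4, T (Nclosed e (u i)) = [set u i].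
Proof.
move=> [_ e_irr] _ u_inj u_twins BB_u T T_nc T_size.
apply: exists_self_taught_false_twin => //; first by rewrite T_size.
by rewrite card_ord.
Qed.
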